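(* Let $\varepsilon>0$, $\alpha$ an ordinal, and $h\in d_\varepsilon^\alpha(B_{\ell_1([0,\omega])})$. Then for every $m\in\mathbb N$, $\tau_m h\in d_\varepsilon^\alpha(B_{\ell_1([0,\omega])})$, where $\tau_m:\ell_1([0,\omega])\to\ell_1([0,\omega])$ is defined by $\tau_m h(n)=h(n-m)$ for $m\le n<\omega$, $\tau_m h(n)=0$ for $n<m$, and $\tau_m h(\omega)=h(\omega)$.
   Context: $[0,\omega]=\{0,1,2,\dots\}\cup\{\omega\}$ with the order topology (a convergent sequence with its limit), and $\ell_1([0,\omega])$ is identified with the dual of $C([0,\omega])$, carrying the corresponding weak$^*$-topology. For a weak$^*$-compact $K\subset X^*$: for $x\in X,t\in\mathbb R$, $H(x,t)=\{x^*: x^*(x)>t\}$; a weak$^*$-slice of $K$ is a nonempty $H(x,t)\cap K$; $d_\varepsilon K$ is $K$ minus the union of all weak$^*$-slices of $K$ of norm diameter $<\varepsilon$; $d_\varepsilon^0K=K$, $d_\varepsilon^{\beta+1}K=d_\varepsilon(d_\varepsilon^\beta K)$, $d_\varepsilon^\beta K=\bigcap_{\mu<\beta}d_\varepsilon^\mu K$ for limit $\beta$. *)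

From Stdlib Require Import Reals Arith.
Open Scope R_scope.

(* An element h of l_1([0,omega]) = C([0,omega])^*:
   lseq h n = h(n) for n < omega, lom h = h(omega).
   Summability is not part of the type; it is implied by membership in the
   unit ball below. *)
Record L1 := mkL1 { lseq : nat -> R ; lom : R }.

Definition l1_norm_le (h : L1) (r : R) : Prop :=
  forall N : nat, sum_f_R0 (fun n => Rabs (lseq h n)) N + Rabs (lom h) <= r.

Definition l1_sub (g k : L1) : L1 :=
  mkL1 (fun n => lseq g n - lseq k n) (lom g - lom k).

Definition Ball (h : L1) : Prop := l1_norm_le h 1.

(* An element of C([0,omega]) is a convergent sequence x with limit l
   (x(omega) = l).  Duality: <h, x> = sum_n h(n) x(n) + h(omega) l.
   pair_gt h x l t  means  <h,x> > t. *)
Definition pair_gt (h : L1) (x : nat -> R) (l t : R) : Prop :=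
  exists s : R, infinite_sum (fun n => lseq h n * x n) s /\ s + lom h * l > t.

Definition slice (S : L1 -> Prop) (x : nat -> R) (l t : R) (g : L1) : Prop :=
  S g /\ pair_gt g x l t.

Definition diam_lt (A : L1 -> Prop) (eps : R) : Prop :=
  exists delta : R, delta < eps /\
    forall g k : L1, A g -> A k -> l1_norm_le (l1_sub g k) delta.

Definition d_eps (eps : R) (S : L1 -> Prop) (h : L1) : Prop :=
  S h /\
  ~ (exists (x : nat -> R) (l t : R),
        Un_cv x l /\
        (exists g, slice S x l t g) /\
        diam_lt (slice S x l t) eps /\
        slice S x l t h).

(* Ordinals are represented by elements of an arbitrary well-ordered type
   (O, lt); transfinite iteration by well-founded recursion. *)
Section Iter.
Variables (O : Type) (lt : O -> O -> Prop) (wf : well_founded lt).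

Definition is_zero (b : O) : Prop := forall m, ~ lt m b.
Definition is_pred (g b : O) : Prop := lt g b /\ forall m, lt g m -> ~ lt m b.
Definition is_limit (b : O) : Prop := ~ is_zero b /\ ~ (exists g, is_pred g b).

Definition iter_step (D : (L1 -> Prop) -> (L1 -> Prop)) (K : L1 -> Prop)
  (b : O) (rec : forall m, lt m b -> L1 -> Prop) : L1 -> Prop :=
  fun h =>
    (is_zero b /\ K h)
    \/ (exists g (H : lt g b), is_pred g b /\ D (rec g H) h)
    \/ (is_limit b /\ forall m (H : lt m b), rec m H h).

(* d^b K with d^0 K = K, d^{g+1} K = D (d^g K), d^b K = ∩_{m<b} d^m K (b limit) *)
Definition deriv_iter (D : (L1 -> Prop) -> (L1 -> Prop)) (K : L1 -> Prop) :
  O -> L1 -> Prop :=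
  Fix wf (fun _ => L1 -> Prop) (iter_step D K).
End Iter.

Definition tau (m : nat) (h : L1) : L1 :=
  mkL1 (fun n => if Nat.ltb n m then 0 else lseq h (n - m)%nat) (lom h).

From Stdlib Require Import Reals Arith Lia Lra FunctionalExtensionality.
Open Scope R_scope.

(* Proof idea.  tau_m is a linear isometry of l_1([0,omega]) mapping the
   unit ball into itself, and it is the adjoint of the left shift
   x |-> x(. + m) on C([0,omega]): <tau_m g, x> = <g, x(. + m)>.
   Hence every weak*-slice of a set S containing tau_m h pulls back along
   tau_m to a weak*-slice of S containing h, and if S is tau_m-invariant the
   pulled-back slice is no larger in diameter.  So a tau_m-invariant S has a
   tau_m-invariant derived set d_eps S, and transfinite induction over the
   iterates d_eps^b of the (invariant) ball gives the theorem. *)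

Definition shift_right (m : nat) (G : nat -> R) (n : nat) : R :=
  if Nat.ltb n m then 0 else G (n - m)%nat.

Lemma shift_right_lt m G n : (n < m)%nat -> shift_right m G n = 0.
Proof. intro Hn. unfold shift_right. now rewrite (proj2 (Nat.ltb_lt n m) Hn). Qed.

Lemma shift_right_ge m G n : (m <= n)%nat -> shift_right m G n = G (n - m)%nat.
Proof. intro Hn. unfold shift_right. now rewrite (proj2 (Nat.ltb_ge n m) Hn). Qed.

Lemma sum_shift_right_initial m G N :
  (N < m)%nat -> sum_f_R0 (shift_right m G) N = 0.
Proof.
  induction N as [|N IH]; intro HN; simpl.
  - apply shift_right_lt; lia.
  - rewrite IH, shift_right_lt by lia. ring.
Qed.

Lemma sum_shift_right m G N :
  sum_f_R0 (shift_right m G) (m + N) = sum_f_R0 G N.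
Proof.
  induction N as [|N IH].
  - rewrite Nat.add_0_r. destruct m as [|m'].
    + simpl. rewrite shift_right_ge by lia. reflexivity.
    + simpl. rewrite sum_shift_right_initial, shift_right_ge by lia.
      rewrite Nat.sub_diag. ring.
  - replace (m + S N)%nat with (S (m + N)) by lia. simpl.
    rewrite IH, shift_right_ge by lia.
    now replace (S (m + N) - m)%nat with (S N) by lia.
Qed.

Lemma infinite_sum_shift_right m G s :
  infinite_sum (shift_right m G) s <-> infinite_sum G s.
Proof.
  split; intros H e He; destruct (H e He) as [N0 HN].
  - exists N0. intros n Hn. rewrite <- (sum_shift_right m). apply HN. lia.
  - exists (N0 + m)%nat. intros n Hn.
    replace n with (m + (n - m))%nat by lia. rewrite sum_shift_right.
    apply HN. lia.
Qed.

Lemma partial_sums_bound_shift_right m G a r :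
  (forall n, 0 <= G n) ->
  (forall N, sum_f_R0 (shift_right m G) N + a <= r) <->
  (forall N, sum_f_R0 G N + a <= r).
Proof.
  intros Hpos. split; intros H N.
  - rewrite <- (sum_shift_right m). apply H.
  - destruct (Nat.lt_ge_cases N m).
    + rewrite sum_shift_right_initial by lia.
      specialize (H 0%nat). specialize (Hpos 0%nat). simpl in H. lra.
    + replace N with (m + (N - m))%nat by lia. rewrite sum_shift_right. apply H.
Qed.

Lemma l1_sub_tau m g k : l1_sub (tau m g) (tau m k) = tau m (l1_sub g k).
Proof.
  unfold l1_sub, tau; simpl. f_equal. apply functional_extensionality. intro n.
  destruct (Nat.ltb n m); ring.
Qed.

Lemma l1_norm_le_tau m h r : l1_norm_le (tau m h) r <-> l1_norm_le h r.
Proof.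
  unfold l1_norm_le.
  assert (Habs : (fun n => Rabs (lseq (tau m h) n))
                 = shift_right m (fun n => Rabs (lseq h n))).
  { apply functional_extensionality. intro n. simpl. unfold shift_right.
    destruct (Nat.ltb n m); [apply Rabs_R0 | reflexivity]. }
  rewrite Habs. simpl. apply partial_sums_bound_shift_right. intro. apply Rabs_pos.
Qed.

Lemma ball_tau m h : Ball h -> Ball (tau m h).
Proof. apply l1_norm_le_tau. Qed.

Lemma pair_gt_tau m g x l t :
  pair_gt (tau m g) x l t <-> pair_gt g (fun n => x (n + m)%nat) l t.
Proof.
  assert (Hterms : (fun n => lseq (tau m g) n * x n)
                   = shift_right m (fun n => lseq g n * x (n + m)%nat)).
  { apply functional_extensionality. intro n. simpl. unfold shift_right.
    destruct (Nat.ltb n m) eqn:E; [ring |].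
    apply Nat.ltb_ge in E. now replace (n - m + m)%nat with n by lia. }
  unfold pair_gt. rewrite Hterms. simpl.
  split; intros [s [Hs Ht]]; exists s; split; try exact Ht;
    apply (infinite_sum_shift_right m); exact Hs.
Qed.

Lemma Un_cv_shift_left x l m : Un_cv x l -> Un_cv (fun n => x (n + m)%nat) l.
Proof.
  intros Hcv e He. destruct (Hcv e He) as [N0 HN].
  exists N0. intros n Hn. apply HN. lia.
Qed.

(* If T h lay in a slice of diameter < eps, h would lie in the
   pulled-back slice, whose diameter is no larger. *)
Lemma d_eps_invariant eps (S : L1 -> Prop) (T : L1 -> L1) :
  (forall g, S g -> S (T g)) ->
  (forall g k r, l1_norm_le (l1_sub (T g) (T k)) r -> l1_norm_le (l1_sub g k) r) ->
  (forall x l t, Un_cv x l -> exists x' l' t', Un_cv x' l' /\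
     forall g, pair_gt (T g) x l t <-> pair_gt g x' l' t') ->
  forall h, d_eps eps S h -> d_eps eps S (T h).
Proof.
  intros HS Hdist Hpull h [Sh Hnot]. split; [now apply HS |].
  intros [x [l [t [Hcv [_ [[delta [Hdelta Hdiam]] [_ PTh]]]]]]].
  destruct (Hpull x l t Hcv) as [x' [l' [t' [Hcv' Hpair]]]].
  apply Hnot. exists x', l', t'.
  assert (Hh : slice S x' l' t' h) by (split; [exact Sh | now apply Hpair]).
  split; [exact Hcv' |]. split; [now exists h |]. split; [| exact Hh].
  exists delta. split; [exact Hdelta |].
  intros g k [Sg Pg] [Sk Pk]. apply Hdist, Hdiam.
  - split; [now apply HS | now apply Hpair].
  - split; [now apply HS | now apply Hpair].
Qed.

Lemma d_eps_tau eps m (S : L1 -> Prop) :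
  (forall g, S g -> S (tau m g)) ->
  forall h, d_eps eps S h -> d_eps eps S (tau m h).
Proof.
  intro HS. apply d_eps_invariant; [exact HS | |].
  - intros g k r. rewrite l1_sub_tau. apply l1_norm_le_tau.
  - intros x l t Hcv. exists (fun n => x (n + m)%nat), l, t.
    split; [now apply Un_cv_shift_left |]. intro g. apply pair_gt_tau.
Qed.

Section TransfiniteIterates.
Variables (O : Type) (lt : O -> O -> Prop) (wf : well_founded lt).

Lemma deriv_iter_unfold D K b :
  deriv_iter O lt wf D K b =
  iter_step O lt D K b (fun c _ => deriv_iter O lt wf D K c).
Proof.
  unfold deriv_iter. apply (Fix_eq wf (fun _ => L1 -> Prop) (iter_step O lt D K)).
  intros c f g E.
  replace g with f; [reflexivity |].
  apply functional_extensionality_dep; intro y.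
  apply functional_extensionality_dep; intro p. apply E.
Qed.

Lemma deriv_iter_invariant (D : (L1 -> Prop) -> L1 -> Prop) K (T : L1 -> L1) :
  (forall g, K g -> K (T g)) ->
  (forall S : L1 -> Prop, (forall g, S g -> S (T g)) ->
     forall g, D S g -> D S (T g)) ->
  forall b h, deriv_iter O lt wf D K b h -> deriv_iter O lt wf D K b (T h).
Proof.
  intros HK HD b. induction b as [b IH] using (well_founded_ind wf).
  intros h Hh. rewrite deriv_iter_unfold in Hh |- *.
  destruct Hh as [[Hzero Kh] | [[c [Hc [Hpred DS]]] | [Hlim Hall]]].
  - left. split; [exact Hzero | now apply HK].
  - right; left. exists c, Hc. split; [exact Hpred |].
    apply HD; [| exact DS]. intros g Hg. exact (IH c Hc g Hg).
  - right; right. split; [exact Hlim |].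
    intros c Hc. exact (IH c Hc h (Hall c Hc)).
Qed.

End TransfiniteIterates.

Theorem mainTheorem6
  (O : Type) (lt : O -> O -> Prop) (wf : well_founded lt)
  (lt_trans : forall a b c, lt a b -> lt b c -> lt a c)
  (lt_total : forall a b, lt a b \/ a = b \/ lt b a)
  (eps : R) (alpha : O) (h : L1) :
  eps > 0 ->
  deriv_iter O lt wf (d_eps eps) Ball alpha h ->
  forall m : nat, deriv_iter O lt wf (d_eps eps) Ball alpha (tau m h).
Proof.
  intros _ Hh m.
  apply (deriv_iter_invariant O lt wf (d_eps eps) Ball (tau m)); [| | exact Hh].
  - apply ball_tau.
  - intro S. apply d_eps_tau.
Qed.
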